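(* For every $n\ge 3$, the local metric dimension of the convex polytope graph $U_n$ is $lmd(U_n)=2$.
   Context: For $n\ge 3$, $U_n$ is the graph with vertex set $\{a_i,b_i,c_i,d_i,e_i : 1\le i\le n\}$ and edge set $\{a_ia_{i+1}, b_ib_{i+1}, e_ie_{i+1}, a_ib_i, b_ic_i, c_id_i, d_ie_i, c_{i+1}d_i : 1\le i\le n\}$, indices taken modulo $n$. A vertex $w$ resolves $u,v$ if $d(u,w)\neq d(v,w)$ ($d$ the graph distance). A set $W$ is a local resolving set if every two adjacent vertices are resolved by some element of $W$; $lmd(G)$ is the minimum cardinality of a local resolving set of $G$. *)

From mathcomp Require Import all_boot all_order.
Set Implicit Arguments. Unset Strict Implicit. Unset Printing Implicit Defensive.

Section Graphs.
Variable T : finType.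
Variable e : rel T.

Fixpoint ball (k : nat) (u : T) : {set T} :=
  match k with
  | 0 => [set u]
  | k'.+1 => let S := ball k' u in
             S :|: [set y | [exists x in S, e x y]]
  end.

(* graph distance: least k with v in ball k u; equals #|T| ("infinity")
   when v is unreachable from u (never happens in a connected graph). *)
Definition gdist (u v : T) : nat :=
  find (fun k => v \in ball k u) (iota 0 #|T|).

Definition resolves (w u v : T) : bool := gdist u w != gdist v w.

Definition local_resolving (W : {set T}) : bool :=
  [forall u, forall v, e u v ==> [exists w in W, resolves w u v]].

Definition lmd : nat :=
  \big[minn/#|T|]_(W : {set T} | local_resolving W) #|W|.
End Graphs.

(* The convex polytope graph U_n.  Vertex (k, i) with k : 'I_5 encodes
   k = 0,1,2,3,4 <-> a_i, b_i, c_i, d_i, e_i (indices 0..n-1, mod n). *)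
Definition Uvert (n : nat) := ('I_5 * 'I_n)%type.

Definition Uarc (n : nat) (x y : Uvert n) : bool :=
  let kx := val x.1 in let ky := val y.1 in
  let i := val x.2 in let j := val y.2 in
  [|| [&& kx == 0, ky == 0 & j == i.+1 %% n]
    , [&& kx == 1, ky == 1 & j == i.+1 %% n]
    , [&& kx == 4, ky == 4 & j == i.+1 %% n]
    , [&& kx == 0, ky == 1 & j == i]
    , [&& kx == 1, ky == 2 & j == i]
    , [&& kx == 2, ky == 3 & j == i]
    , [&& kx == 3, ky == 4 & j == i]
    | [&& kx == 3, ky == 2 & j == i.+1 %% n]].

Definition Uadj (n : nat) : rel (Uvert n) := fun x y => Uarc x y || Uarc y x.

(* Lower bound: U_n contains the 5-cycle b_0 c_0 d_0 c_1 b_1.  Along an edge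
   resolved by w the distance to w changes by exactly one, so a single vertex
   resolving every edge of a closed walk forces its length to be even.
   Upper bound: the distance from any vertex to c_s is an explicit function of
   the cyclic distance from its index to s.  This shows that an edge is left
   unresolved by c_s only in a few configurations near s or its antipode, and
   for n >= 9 the configurations of c_0 and of c_((n-1)/2) never overlap.  For
   3 <= n <= 8 a resolving pair is checked by computing all distances with a
   breadth-first search whose output is then certified. *)

From mathcomp Require Import all_boot all_order.
From mathcomp Require Import zify.
Set Implicit Arguments. Unset Strict Implicit. Unset Printing Implicit Defensive.

Section GraphDistance.
Variables (T : finType) (e : rel T).

Lemma ball_succ_edge k u y : e u y -> ball e k y \subset ball e k.+1 u.
Proof.
move=> euy; elim: k => [|k IH].
  apply/subsetP=> z; rewrite !inE => /eqP ->.
  by apply/orP; right; apply/existsP; exists u; rewrite inE eqxx.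
apply/subsetP=> z; rewrite [in X in X -> _]inE => /orP [zb|].
  by rewrite inE (subsetP IH z zb).
rewrite inE => /existsP [x /andP [xb exz]].
rewrite !inE; apply/orP; right; apply/existsP; exists x.
by rewrite (subsetP IH x xb).
Qed.

Lemma ball_lipschitz (f : T -> nat) :
  (forall z x, e z x -> f z <= (f x).+1) ->
  forall k u x, x \in ball e k u -> f u <= f x + k.
Proof.
move=> f_lip; elim=> [|k IH] u x /=.
  by rewrite inE => /eqP ->; rewrite addn0.
rewrite inE => /orP [xb|]; first by rewrite addnS ltnW // ltnS IH.
rewrite inE => /existsP [z /andP [zb ezx]].
have := IH _ _ zb; have := f_lip _ _ ezx; lia.
Qed.

Lemma gdist_le u w k : k < #|T| -> w \in ball e k u -> gdist e u w <= k.
Proof.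
move=> kT wb; rewrite leqNgt; apply/negP=> lt_k.
by have := before_find 0 lt_k; rewrite nth_iota ?add0n ?wb //; lia.
Qed.

Lemma gdist_le_card u w : gdist e u w <= #|T|.
Proof. by rewrite /gdist -{2}(size_iota 0 #|T|) find_size. Qed.

Lemma gdist_ball u w : gdist e u w < #|T| -> w \in ball e (gdist e u w) u.
Proof.
move=> lt_T; have has_w : has (fun k => w \in ball e k u) (iota 0 #|T|).
  by rewrite has_find size_iota.
by have := nth_find 0 has_w; rewrite nth_iota ?add0n.
Qed.

Lemma gdist_edge u v w : e u v -> gdist e u w <= (gdist e v w).+1.
Proof.
move=> euv; case: (ltnP (gdist e v w) #|T|) => [lt_T|ge_T]; last first.
  exact: leq_trans (gdist_le_card _ _) (leqW ge_T).
have wb := subsetP (ball_succ_edge (gdist e v w) euv) _ (gdist_ball lt_T).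
case: (ltnP (gdist e v w).+1 #|T|) => [lt1_T|ge1_T]; first exact: gdist_le wb.
exact: leq_trans (gdist_le_card _ _) ge1_T.
Qed.

Section Potential.
Variables (w : T) (f : T -> nat).
Hypothesis f_lip : forall z x, e z x -> f z <= (f x).+1.
Hypothesis f_eq0 : forall x, (f x == 0) = (x == w).
Hypothesis f_descent : forall x, 0 < f x -> exists y, e x y /\ (f y).+1 = f x.
Hypothesis f_lt_card : forall x, f x < #|T|.

Lemma potential_ball u : w \in ball e (f u) u.
Proof.
suff ball_m m v : f v = m -> w \in ball e m v by exact: ball_m.
elim: m v => [|m IH] v fv.
  by move/eqP: fv; rewrite f_eq0 => /eqP ->; rewrite inE.
have [|y [evy fy]] := f_descent (x := v); first by rewrite fv.
by apply: (subsetP (ball_succ_edge m evy)); apply: IH; lia.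
Qed.

Lemma gdist_potential u : gdist e u w = f u.
Proof.
apply/eqP; rewrite eqn_leq gdist_le ?potential_ball //=.
have := gdist_le_card u w; rewrite leq_eqVlt => /orP [/eqP eq_T|lt_T].
  by rewrite eq_T ltnW.
have := ball_lipschitz f_lip (gdist_ball lt_T).
by have /eqP -> : f w == 0 by rewrite f_eq0.
Qed.

End Potential.

Section OddCycle.
Hypothesis e_sym : symmetric e.

Lemma resolves_odd w x y : e x y -> resolves e w x y ->
  odd (gdist e y w) = ~~ odd (gdist e x w).
Proof.
move=> exy; have := gdist_edge w exy; rewrite e_sym in exy; have := gdist_edge w exy.
rewrite /resolves; move: (gdist e x w) (gdist e y w) => a b ab ba /negP ne.
have [->|->] : b = a.+1 \/ a = b.+1 by lia.
all: by rewrite /= ?negbK.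
Qed.

Lemma resolving_path_parity w x p :
  path [rel a b | e a b && resolves e w a b] x p ->
  odd (gdist e (last x p) w) = odd (gdist e x w) (+) odd (size p).
Proof.
elim: p x => [|y p IH] x /=; first by rewrite addbF.
move=> /andP [/andP [exy rxy] yp]; rewrite IH // (resolves_odd exy rxy).
by rewrite addNb addbN.
Qed.

Lemma local_resolving_odd_cycle (W : {set T}) c :
  cycle e c -> odd (size c) -> local_resolving e W -> 1 < #|W|.
Proof.
case: c => // x p cyc odd_c /forallP LR; rewrite ltnNge; apply/negP => W_le1.
have resolved a b : e a b -> exists2 w, w \in W & resolves e w a b.
  by move=> eab; move/forallP/(_ b)/implyP/(_ eab)/existsP: (LR a) => [w /andP []]; exists w.
have [w wW _] : exists2 w, w \in W & resolves e w x (head x (rcons p x)).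
  by apply: resolved; move: cyc; rewrite /= headI /= => /andP [].
have {}resolved a b : e a b -> e a b && resolves e w a b.
  move=> eab; rewrite eab; have [w' w'W] := resolved a b eab.
  by rewrite ((card_le1_eqP W_le1) w' w).
have := resolving_path_parity (sub_path resolved cyc).
move: odd_c; rewrite last_rcons size_rcons /= => ->; rewrite addbT.
by case: (odd _).
Qed.

End OddCycle.

Lemma local_resolving_pair w1 w2 :
  (forall u v, e u v -> resolves e w1 u v || resolves e w2 u v) ->
  local_resolving e [set w1; w2].
Proof.
move=> res; apply/forallP=> u; apply/forallP=> v; apply/implyP=> euv.
by case/orP: (res u v euv) => r; apply/existsP; [exists w1|exists w2]; rewrite !inE eqxx ?orbT.
Qed.

Lemma lmd_eq (W0 : {set T}) : local_resolving e W0 ->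
  (forall W, local_resolving e W -> #|W0| <= #|W|) -> lmd e = #|W0|.
Proof.
move=> LR0 W0_min; apply/eqP; rewrite eqn_leq; apply/andP; split.
  rewrite /lmd; elim: (index_enum _) (mem_index_enum W0) => // W r IH.
  rewrite inE big_cons => /orP [/eqP <-|W0r]; first by rewrite LR0 geq_minl.
  by case: ifP => _; [apply: leq_trans (geq_minr _ _) _|]; apply: IH.
rewrite /lmd; elim/big_ind: _ => [||W LR]; last exact: W0_min.
- exact: max_card.
- by move=> a b ha hb; rewrite leq_min ha hb.
Qed.

End GraphDistance.

Definition cdist (n s i : nat) : nat :=
  let d := (i %% n - s) + (s - i %% n) in minn d (n - d).

Section CyclicDistance.
Variables (n s : nat).
Hypotheses (n_gt0 : 0 < n) (s_lt_n : s < n).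

Lemma cdist_mod i : cdist n s (i %% n) = cdist n s i.
Proof. by rewrite /cdist modn_mod. Qed.

Lemma cdist_modS i : cdist n s (i %% n).+1 = cdist n s i.+1.
Proof. by rewrite /cdist -addn1 modnDml addn1. Qed.

Lemma cdist_addn i : cdist n s (i + n) = cdist n s i.
Proof. by rewrite /cdist modnDr. Qed.

Lemma cdist_small i : i < n ->
  cdist n s i = minn ((i - s) + (s - i)) (n - ((i - s) + (s - i))).
Proof. by move=> i_lt_n; rewrite /cdist modn_small. Qed.

Lemma cdist_id : cdist n s s = 0.
Proof. by rewrite cdist_small // subnn minnC. Qed.

Lemma cdist_eq0 i : i < n -> cdist n s i = 0 -> i = s.
Proof. by move=> i_lt_n; rewrite cdist_small //; lia. Qed.

Lemma cdist_le_half i : (cdist n s i).*2 <= n.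
Proof. by rewrite /cdist; have := ltn_pmod i n_gt0; lia. Qed.

Lemma cdist_succ i :
  cdist n s i.+1 <= (cdist n s i).+1 /\ cdist n s i <= (cdist n s i.+1).+1.
Proof.
rewrite -cdist_modS -(cdist_mod i); have := ltn_pmod i n_gt0.
case: (ltnP (i %% n).+1 n) => [iS_lt_n i_lt_n|iS_ge_n i_lt_n].
  rewrite !cdist_small //; lia.
have -> : (i %% n).+1 = 0 + n by lia.
by rewrite cdist_addn !cdist_small //; lia.
Qed.

Lemma cdist_pred (i : 'I_n) : cdist n s (ord_pred i).+1 = cdist n s i.
Proof.
by rewrite -cdist_mod -[_ %% n]/(val (ordS (ord_pred i))) ord_predK.
Qed.

Lemma cdist_descent (i : 'I_n) : 2 < n -> 0 < cdist n s i ->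
  (cdist n s i.+1).+1 = cdist n s i \/ (cdist n s (ord_pred i)).+1 = cdist n s i.
Proof.
move=> n_gt2; rewrite /=; have i_lt_n := ltn_ord i.
case: (ltnP i.+1 n) => [iS_lt_n|iS_ge_n].
  case: (posnP i) => [i0|i_gt0].
    by rewrite i0 add0n (modn_small (m := n.-1)) ?cdist_small //; lia.
  have -> : (i + n).-1 = i.-1 + n by lia.
  by rewrite modnDr modn_small ?cdist_small //; lia.
have -> : i.+1 = 0 + n by lia.
have -> : (i + n).-1 = i.-1 + n by lia.
by rewrite cdist_addn modnDr modn_small ?cdist_small //; lia.
Qed.

End CyclicDistance.

Definition bvert n (i : 'I_n) : Uvert n := (Ordinal (isT : 1 < 5), i).
Definition cvert n (i : 'I_n) : Uvert n := (Ordinal (isT : 2 < 5), i).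
Definition dvert n (i : 'I_n) : Uvert n := (Ordinal (isT : 3 < 5), i).
Definition evert n (i : 'I_n) : Uvert n := (Ordinal (isT : 4 < 5), i).

(* With t the cyclic distance from i to s: a_i, b_i and e_i travel along their
   own cycle, c_i reaches c_s through two d-vertices when t = 1 and along the
   b-cycle when t >= 2, and d_i, adjacent to c_i and c_(i+1), uses the nearer
   of the two. *)
Definition c_dist n s (k i : nat) : nat :=
  let t := cdist n s i in let t' := minn t (cdist n s i.+1) in
  match k with
  | 0 => t.+2 | 1 => t.+1 | 2 => t + minn t 2
  | 3 => t' + minn t'.+1 3 | _ => t'.+2
  end.

Section DistanceToC.
Variables (n : nat) (s : 'I_n).
Hypothesis n_gt2 : 2 < n.

Let f (x : Uvert n) := c_dist n s x.1 x.2.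
Let n_gt0 : 0 < n. Proof. exact: ltn_trans n_gt2. Qed.
Let cdist_succ_s := cdist_succ n_gt0 (ltn_ord s).
Let cdist_desc (i : 'I_n) := @cdist_descent n s n_gt0 (ltn_ord s) i n_gt2.
Let pred_succ (i : 'I_n) : ((i + n).-1 %% n).+1 %% n = i := congr1 val (ord_predK i).

Lemma c_dist_arc x y : Uarc x y -> f y <= (f x).+1 /\ f x <= (f y).+1.
Proof.
case: x y => [[kx kx_lt5] [i i_lt_n]] [[ky ky_lt5] [j j_lt_n]].
have Si := cdist_succ_s i; have SSi := cdist_succ_s i.+1.
rewrite /Uarc /f /= => /orP[|/orP[|/orP[|/orP[|/orP[|/orP[|/orP[|]]]]]]]
  => /and3P [/eqP ? /eqP ? /eqP ?]; subst; rewrite /c_dist /= ?cdist_mod ?cdist_modS; lia.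
Qed.

Lemma c_dist_eq0 x : (f x == 0) = (x == cvert s).
Proof.
apply/eqP/eqP => [|->]; last by rewrite /f /c_dist /= cdist_id.
case: x => [[k k_lt5] i]; rewrite /f /c_dist /= => fx0.
have [k2 t0] : k = 2 /\ cdist n s i = 0.
  by case: k k_lt5 fx0 => [|[|[|[|[|//]]]]] /= _; lia.
have i_s : val i = s := cdist_eq0 n_gt0 (ltn_ord s) (ltn_ord i) t0.
by subst k; congr pair; apply: val_inj.
Qed.

Lemma c_dist_lt_card x : f x < #|{: Uvert n}|.
Proof.
rewrite card_prod !card_ord /f /c_dist.
have := cdist_le_half n_gt0 (ltn_ord s) x.2; have := cdist_le_half n_gt0 (ltn_ord s) (x.2).+1.
by case: (val x.1) => [|[|[|[|k]]]] /=; lia.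
Qed.

Lemma c_dist_descent_abc (k : 'I_5) i : k < 3 -> 0 < f (k, i) ->
  exists y, Uadj (k, i) y /\ (f y).+1 = f (k, i).
Proof.
have [Si _] := cdist_succ_s i; have pred_t := cdist_pred s i.
case: k => [[|[|[|//]]] k_lt5] _; rewrite /f /c_dist /= => f_gt0.
- by exists (bvert i); rewrite /Uadj /Uarc /= eqxx.
- case: (posnP (cdist n s i)) => [t0|t_gt0].
    by exists (cvert i); rewrite /Uadj /Uarc /= eqxx /= t0.
  case: (cdist_desc t_gt0) => /= desc.
    exists (bvert (ordS i)).
    by rewrite /Uadj /Uarc /= eqxx /= cdist_mod desc.
  exists (bvert (ord_pred i)).
  by rewrite /Uadj /Uarc /= pred_succ eqxx ?orbT desc.
- case: (leqP 2 (cdist n s i)) => [t_ge2|t_lt2].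
    exists (bvert i); rewrite /Uadj /Uarc /= eqxx /= ?orbT; lia.
  case: (cdist_desc (ltac:(lia) : 0 < cdist n s i)) => /= desc.
    exists (dvert i); rewrite /Uadj /Uarc /= eqxx /= ?orbT; lia.
  exists (dvert (ord_pred i)).
  rewrite /Uadj /Uarc /= pred_succ eqxx /= ?orbT pred_t; lia.
Qed.

Lemma c_dist_descent_de (k : 'I_5) i : 3 <= k -> 0 < f (k, i) ->
  exists y, Uadj (k, i) y /\ (f y).+1 = f (k, i).
Proof.
have [Si _] := cdist_succ_s i; have pred_t := cdist_pred s i.
case: k => [[|[|[|[|[|//]]]]] k_lt5] //= _; rewrite /f /c_dist /=; set t' := minn _ _ => f_gt0.
- case: (leqP 2 t') => [t'_ge2|t'_lt2].
    exists (evert i); rewrite /Uadj /Uarc /= eqxx /= ?orbT; lia.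
  case: (leqP (cdist n s i) (cdist n s i.+1)) => cmp.
    exists (cvert i); rewrite /Uadj /Uarc /= eqxx /= ?orbT; lia.
  exists (cvert (ordS i)).
  rewrite /Uadj /Uarc /= eqxx /= ?orbT cdist_mod; lia.
- case: (posnP t') => [t'0|t'_gt0].
    exists (dvert i); rewrite /Uadj /Uarc /= eqxx /= ?orbT; lia.
  case: (leqP (cdist n s i) (cdist n s i.+1)) => cmp.
    case: (cdist_desc (ltac:(lia) : 0 < cdist n s i)) => /= desc; first lia.
    exists (evert (ord_pred i)).
    rewrite /Uadj /Uarc /= pred_succ eqxx /= ?orbT pred_t; lia.
  have t1_gt0 : 0 < cdist n s (ordS i) by rewrite /= cdist_mod; lia.
  case: (cdist_desc t1_gt0); rewrite ?ordSK /= ?cdist_mod ?cdist_modS => desc; last lia.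
  exists (evert (ordS i)).
  rewrite /Uadj /Uarc /= eqxx /= ?orbT cdist_mod cdist_modS; lia.
Qed.

Lemma gdist_cvert u : gdist (@Uadj n) u (cvert s) = f u.
Proof.
apply: (gdist_potential _ c_dist_eq0 _ c_dist_lt_card).
  by move=> z x /orP [] /c_dist_arc [].
case=> k i; case: (ltnP k 3) => k_bound.
  exact: c_dist_descent_abc.
exact: c_dist_descent_de.
Qed.

End DistanceToC.

(* c_s fails to resolve an arc from layer kx at position i to layer ky only if
   this holds, where t_j is the cyclic distance from i + j to s. *)
Definition c_unresolved (kx ky t0 t1 t2 : nat) : bool :=
  match kx, ky with
  | 0, 0 | 1, 1 => t0 == t1
  | 4, 4 => minn t0 t1 == minn t1 t2
  | 1, 2 => t0 == 1
  | 2, 3 => (t1 < t0) && (2 < t0)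
  | 3, 4 => minn t0 t1 == 1
  | 3, 2 => (t0 < t1) && (1 < t0)
  | _, _ => false
  end.

Lemma c_dist_arc_unresolved n s (x y : Uvert n) : 0 < n -> s < n -> Uarc x y ->
  c_dist n s x.1 x.2 = c_dist n s y.1 y.2 ->
  c_unresolved x.1 y.1 (cdist n s x.2) (cdist n s (x.2).+1) (cdist n s (x.2).+2).
Proof.
move=> n_gt0 s_lt_n; case: x y => [[kx kx_lt5] [i i_lt_n]] [[ky ky_lt5] [j j_lt_n]].
have Si := cdist_succ n_gt0 s_lt_n i; have SSi := cdist_succ n_gt0 s_lt_n i.+1.
rewrite /Uarc /= => /orP[|/orP[|/orP[|/orP[|/orP[|/orP[|/orP[|]]]]]]]
  => /and3P [/eqP ? /eqP ? /eqP ?]; subst;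
  rewrite /c_dist /c_unresolved /= ?cdist_mod ?cdist_modS; lia.
Qed.

Lemma cdist_antipodal_landmarks n j : 8 < n -> j < n.*2 -> exists r,
  [/\ j = r \/ j = r + n, r < n, cdist n 0 j = minn r (n - r)
    & cdist n (n.-1 %/ 2) j = (r - n.-1 %/ 2) + (n.-1 %/ 2 - r)].
Proof.
move=> n_gt8 j_lt_2n; case: (ltnP j n) => [j_lt_n|j_ge_n].
  by exists j; rewrite !cdist_small //; split; lia.
have wrap s : cdist n s j = cdist n s (j - n).
  by rewrite -{1}(subnK j_ge_n) cdist_addn.
by exists (j - n); rewrite !wrap !cdist_small; try split; lia.
Qed.

Lemma antipodal_landmarks_resolve n kx ky i : 8 < n -> i < n ->
  ~~ (c_unresolved kx ky (cdist n 0 i) (cdist n 0 i.+1) (cdist n 0 i.+2) &&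
      c_unresolved kx ky (cdist n (n.-1 %/ 2) i) (cdist n (n.-1 %/ 2) i.+1)
                        (cdist n (n.-1 %/ 2) i.+2)).
Proof.
move=> n_gt8 i_lt_n.
have [|r0 [i_r0 r0_lt_n -> ->]] := cdist_antipodal_landmarks (j := i) n_gt8; first lia.
have [|r1 [i_r1 r1_lt_n -> ->]] := cdist_antipodal_landmarks (j := i.+1) n_gt8; first lia.
have [|r2 [i_r2 r2_lt_n -> ->]] := cdist_antipodal_landmarks (j := i.+2) n_gt8; first lia.
have ? : r0 = i by lia.
subst r0; clear i_r0.
case: kx => [|[|[|[|[|kx]]]]]; case: ky => [|[|[|[|[|ky]]]]] //=.
all: case: i_r1 => ?; case: i_r2 => ?; subst; lia.
Qed.

Lemma local_resolving_Uarc n (w1 w2 : Uvert n) :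
  (forall x y, Uarc x y -> resolves (@Uadj n) w1 x y || resolves (@Uadj n) w2 x y) ->
  local_resolving (@Uadj n) [set w1; w2].
Proof.
move=> res; apply: local_resolving_pair => u v /orP [/res //|/res].
by rewrite /resolves !(eq_sym (gdist _ v _)).
Qed.

Lemma antipodal_c_resolving n : 8 < n ->
  exists2 W : {set Uvert n}, local_resolving (@Uadj n) W & #|W| = 2.
Proof.
move=> n_gt8; have n_gt0 : 0 < n by lia.
have m_lt_n : n.-1 %/ 2 < n by lia.
exists [set cvert (Ordinal n_gt0); cvert (Ordinal m_lt_n)]; last first.
  by rewrite cards2; case: eqP => // /(congr1 (fun x : Uvert n => val x.2)) /=; lia.
apply: local_resolving_Uarc => x y xy; rewrite /resolves !gdist_cvert; try lia.
apply: contraT; rewrite negb_or !negbK => /andP [/eqP eq0 /eqP eqm].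
have := antipodal_landmarks_resolve x.1 y.1 n_gt8 (ltn_ord x.2).
by rewrite (c_dist_arc_unresolved _ _ xy eq0) ?(c_dist_arc_unresolved _ _ xy eqm).
Qed.

Definition uarcb (n kx i ky j : nat) : bool :=
  [|| [&& kx == 0, ky == 0 & j == i.+1 %% n], [&& kx == 1, ky == 1 & j == i.+1 %% n],
      [&& kx == 4, ky == 4 & j == i.+1 %% n], [&& kx == 0, ky == 1 & j == i],
      [&& kx == 1, ky == 2 & j == i], [&& kx == 2, ky == 3 & j == i],
      [&& kx == 3, ky == 4 & j == i] | [&& kx == 3, ky == 2 & j == i.+1 %% n]].

Definition uadjb n kx i ky j := uarcb n kx i ky j || uarcb n ky j kx i.

Lemma UadjE n (x y : Uvert n) : Uadj x y = uadjb n x.1 x.2 y.1 y.2.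
Proof. by []. Qed.

Section Certificates.
Variable n : nat.

Definition all_uverts (P : nat -> nat -> bool) :=
  all (fun k => all (P k) (iota 0 n)) (iota 0 5).

Definition has_uverts (P : nat -> nat -> bool) :=
  has (fun k => has (P k) (iota 0 n)) (iota 0 5).

Lemma all_uvertsP P : all_uverts P -> forall x : Uvert n, P x.1 x.2.
Proof.
move=> P_all [k i]; have /allP := allP P_all k (ltac:(by rewrite mem_iota ltn_ord)).
by apply; rewrite mem_iota ltn_ord.
Qed.

Lemma has_uvertsP P : has_uverts P -> exists x : Uvert n, P x.1 x.2.
Proof.
move=> /hasP [k]; rewrite mem_iota /= => k_lt5.
move=> /hasP [i]; rewrite mem_iota /= => i_lt_n Pki.
by exists (Ordinal k_lt5, Ordinal i_lt_n).
Qed.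

Definition lookup (d : seq (seq nat)) k i := nth 0 (nth [::] d k) i.

Definition relax (d : seq (seq nat)) k i : nat :=
  let step k' j m := if uadjb n k i k' j then minn m (lookup d k' j).+1 else m in
  foldr (fun k' m => foldr (step k') m (iota 0 n)) (lookup d k i) (iota 0 5).

Definition bfs_step (d : seq (seq nat)) : seq (seq nat) :=
  [seq [seq relax d k i | i <- iota 0 n] | k <- iota 0 5].

Definition dist_table wk wi : nat -> nat -> nat :=
  lookup (iter (5 * n) bfs_step
    [seq [seq if (k == wk) && (i == wi) then 0 else 5 * n | i <- iota 0 n] | k <- iota 0 5]).

(* dist_table is only a candidate; the certificate checks the hypotheses of
   gdist_potential for it. *)
Definition dist_certificate wk wi (d : nat -> nat -> nat) : bool :=
  all_uverts (fun k i =>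
    [&& d k i < 5 * n, (d k i == 0) == ((k == wk) && (i == wi)),
        all_uverts (fun k' j => uadjb n k i k' j ==> (d k' j <= (d k i).+1)) &
        (d k i == 0) || has_uverts (fun k' j => uadjb n k i k' j && ((d k' j).+1 == d k i))]).

Lemma gdist_certificate (w : Uvert n) d : dist_certificate w.1 w.2 d ->
  forall u, gdist (@Uadj n) u w = d u.1 u.2.
Proof.
move=> /all_uvertsP cert; apply: gdist_potential.
- move=> z x; rewrite UadjE /uadjb orbC -/(uadjb _ _ _ _ _).
  by have /and4P [_ _ /all_uvertsP/(_ z)/implyP + _] := cert x.
- move=> x; have /and4P [_ /eqP -> _ _] := cert x.
  by rewrite -[x == w]/((x.1, x.2) == (w.1, w.2)) xpair_eqE.
- move=> x; have /and4P [_ _ _ /orP [/eqP -> //|]] := cert x.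
  by move=> /has_uvertsP [y /andP [xy /eqP dy]]; exists y.
- move=> x; have /and4P [+ _ _ _] := cert x.
  by rewrite card_prod !card_ord.
Qed.

Definition separates (d1 d2 : nat -> nat -> nat) : bool :=
  all_uverts (fun k i => all_uverts (fun k' j =>
    uarcb n k i k' j ==> (d1 k i != d1 k' j) || (d2 k i != d2 k' j))).

End Certificates.

Definition pair_check n k1 i1 k2 i2 : bool :=
  let d1 := dist_table n k1 i1 in let d2 := dist_table n k2 i2 in
  [&& [&& k1 < 5, i1 < n, k2 < 5, i2 < n & (k1, i1) != (k2, i2)],
      dist_certificate n k1 i1 d1, dist_certificate n k2 i2 d2 & separates n d1 d2].

Lemma pair_checkP n k1 i1 k2 i2 : pair_check n k1 i1 k2 i2 ->
  exists2 W : {set Uvert n}, local_resolving (@Uadj n) W & #|W| = 2.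
Proof.
move=> /and4P [/and5P [k1_lt5 i1_lt_n k2_lt5 i2_lt_n neq] cert1 cert2 sep].
pose w1 : Uvert n := (Ordinal k1_lt5, Ordinal i1_lt_n).
pose w2 : Uvert n := (Ordinal k2_lt5, Ordinal i2_lt_n).
exists [set w1; w2]; last by rewrite cards2 /w1 /w2 xpair_eqE -!val_eqE /= -xpair_eqE neq.
apply: local_resolving_Uarc => x y xy.
rewrite /resolves !(gdist_certificate (w := w1) cert1) !(gdist_certificate (w := w2) cert2).
by have /all_uvertsP/(_ y)/implyP := all_uvertsP sep x; apply.
Qed.

Lemma small_resolving n : 2 < n <= 8 ->
  exists2 W : {set Uvert n}, local_resolving (@Uadj n) W & #|W| = 2.
Proof.
case: n => [|[|[|[|[|[|[|[|[|n]]]]]]]]] // _.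
(* The pairs are {c_0, a_1} for n = 3, 4, {c_0, c_1} for n = 5, 6, 7 and
   {c_0, d_3} for n = 8. *)
- by apply: (@pair_checkP 3 2 0 0 1); vm_compute; reflexivity.
- by apply: (@pair_checkP 4 2 0 0 1); vm_compute; reflexivity.
- by apply: (@pair_checkP 5 2 0 2 1); vm_compute; reflexivity.
- by apply: (@pair_checkP 6 2 0 2 1); vm_compute; reflexivity.
- by apply: (@pair_checkP 7 2 0 2 1); vm_compute; reflexivity.
- by apply: (@pair_checkP 8 2 0 3 3); vm_compute; reflexivity.
Qed.

Lemma U_pentagon n (i : 'I_n) :
  cycle (@Uadj n) [:: bvert i; cvert i; dvert i; cvert (ordS i); bvert (ordS i)].
Proof. by rewrite /= /Uadj /Uarc /= !eqxx ?orbT. Qed.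

Lemma U_resolving_pair n : 2 < n ->
  exists2 W : {set Uvert n}, local_resolving (@Uadj n) W & #|W| = 2.
Proof.
case: (ltnP 8 n) => [n_gt8 _|n_le8 n_gt2]; first exact: antipodal_c_resolving.
by apply: small_resolving; rewrite n_gt2 n_le8.
Qed.

Theorem theorem4p1 (n : nat) : 3 <= n -> lmd (@Uadj n) = 2.
Proof.
move=> n_ge3; have [W W_res W_card] := U_resolving_pair n_ge3.
rewrite (lmd_eq W_res) ?W_card // => W' W'_res.
have U_sym : symmetric (@Uadj n) by move=> x y; rewrite /Uadj orbC.
have n_gt0 : 0 < n by apply: leq_trans n_ge3.
exact: (local_resolving_odd_cycle U_sym (U_pentagon (Ordinal n_gt0)) isT W'_res).
Qed.
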